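(* A skew lattice $S$ is a weak distributive solution of the Yang–Baxter equation if and only if it satisfies, for all $x,y,z\in S$, \[ (x\wedge y\wedge x)\vee((x\vee y\vee x)\wedge z\wedge(x\vee y\vee x))\vee(x\wedge y\wedge x) =(x\vee(y\wedge z\wedge y)\vee x)\wedge(y\vee z\vee y)\wedge(x\vee(y\wedge z\wedge y)\vee x). \] In particular, weak distributive solutions form a variety of skew lattices.
   Context: A skew lattice is a set $S$ with two binary operations $\wedge,\vee$, each idempotent and associative, satisfying the absorption laws $x\wedge(x\vee y)=x=x\vee(x\wedge y)$ and $(x\wedge y)\vee y=y=(x\vee y)\wedge y$ for all $x,y\in S$. $S$ is a weak distributive solution if $r_W:S\times S\to S\times S$, $r_W(x,y)=(x\wedge y\wedge x,\,x\vee y\vee x)$, satisfies $(r_W\times\mathrm{id})\circ(\mathrm{id}\times r_W)\circ(r_W\times\mathrm{id})=(\mathrm{id}\times r_W)\circ(r_W\times\mathrm{id})\circ(\mathrm{id}\times r_W)$. *)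

Set Implicit Arguments.

Definition is_skew_lattice (S : Type) (m j : S -> S -> S) : Prop :=
  (forall x, m x x = x) /\ (forall x, j x x = x) /\
  (forall x y z, m x (m y z) = m (m x y) z) /\
  (forall x y z, j x (j y z) = j (j x y) z) /\
  (forall x y, m x (j x y) = x) /\ (forall x y, j x (m x y) = x) /\
  (forall x y, j (m x y) y = y) /\ (forall x y, m (j x y) y = y).

Definition rW (S : Type) (m j : S -> S -> S) (p : S * S) : S * S :=
  let (x, y) := p in (m x (m y x), j x (j y x)).

Definition r12 (S : Type) (r : S * S -> S * S) (t : S * S * S) : S * S * S :=
  let '(x, y, z) := t in let (a, b) := r (x, y) in (a, b, z).
Definition r23 (S : Type) (r : S * S -> S * S) (t : S * S * S) : S * S * S :=
  let '(x, y, z) := t in let (b, c) := r (y, z) in (x, b, c).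

Definition braid_eq (S : Type) (r : S * S -> S * S) : Prop :=
  forall t : S * S * S, r12 r (r23 r (r12 r t)) = r23 r (r12 r (r23 r t)).

Definition weak_distributive_solution (S : Type) (m j : S -> S -> S) : Prop :=
  braid_eq (rW m j).


(* A skew lattice is a weak distributive solution iff the three components of
   the two sides of the braid equation for r_W(x,y) = (x∧y∧x, x∨y∨x) agree.
   Computing them, the left side is
     (a∧(b∧z∧b)∧a,  a∨(b∧z∧b)∨a,  b∨z∨b)      with a = x∧y∧x, b = x∨y∨x,
   and the right side is
     (x∧c∧x,  e∧d∧e,  e∨d∨e)      with c = y∧z∧y, d = y∨z∨y, e = x∨c∨x.
   The middle components agree exactly when the identity of the theorem holds,
   so it suffices to show that the outer components ALWAYS agree.  This rests on
   Leech's theorem that the meet band (and dually the join band) of a skew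
   lattice is regular: x∧y∧x∧z∧x = x∧y∧z∧x. *)

Section MeetRegularity.

Context {S : Type} {m j : S -> S -> S} (H : is_skew_lattice m j).

(* Right-associated notation, so that [x ⊓ y ⊓ x] is literally [m x (m y x)],
   the shape produced by [rW].  Words are kept right-associated throughout. *)
Local Infix "⊓" := m (at level 41, right associativity).
Local Infix "⊔" := j (at level 46, right associativity).

Lemma meet_assoc (x y z : S) : (x ⊓ y) ⊓ z = x ⊓ y ⊓ z.
Proof. destruct H as (_ & _ & E & _). symmetry. apply E. Qed.

Lemma join_assoc (x y z : S) : (x ⊔ y) ⊔ z = x ⊔ y ⊔ z.
Proof. destruct H as (_ & _ & _ & E & _). symmetry. apply E. Qed.

Lemma join_idem (x : S) : x ⊔ x = x.
Proof. destruct H as (_ & E & _). apply E. Qed.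

Lemma meet_absorb (x y : S) : x ⊓ (x ⊔ y) = x.
Proof. destruct H as (_ & _ & _ & _ & E & _). apply E. Qed.

Lemma join_absorb (x y : S) : x ⊔ x ⊓ y = x.
Proof. destruct H as (_ & _ & _ & _ & _ & E & _). apply E. Qed.

Lemma join_absorb_r (x y : S) : x ⊓ y ⊔ y = y.
Proof. destruct H as (_ & _ & _ & _ & _ & _ & E & _). apply E. Qed.

Lemma meet_absorb_r (x y : S) : (x ⊔ y) ⊓ y = y.
Proof. destruct H as (_ & _ & _ & _ & _ & _ & _ & E). apply E. Qed.

Lemma meet_absorb_prefix (x y z : S) : x ⊓ (x ⊔ y) ⊓ z = x ⊓ z.
Proof. now rewrite <- meet_assoc, meet_absorb. Qed.

Lemma meet_join_split (x y z : S) : (x ⊔ y) ⊓ z = x ⊓ z ⊔ (x ⊔ y) ⊓ z.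
Proof.
  transitivity (x ⊓ (x ⊔ y) ⊓ z ⊔ (x ⊔ y) ⊓ z).
  - symmetry. apply join_absorb_r.
  - now rewrite meet_absorb_prefix.
Qed.

Lemma meet_reabsorb (x y w : S) : x ⊓ y = x ⊓ y ⊓ (x ⊔ w) ⊓ y.
Proof. rewrite (meet_join_split x w y). now rewrite <- meet_assoc, meet_absorb. Qed.

Lemma meet_join_sandwich (x p q : S) : x ⊓ (p ⊔ x ⊔ q) ⊓ x = x.
Proof.
  pose proof (meet_reabsorb (p ⊔ x) x q) as E.
  rewrite <- (meet_assoc (p ⊔ x) x), meet_absorb_r, join_assoc in E.
  now symmetry.
Qed.

Lemma join_swap_sandwich (x y : S) : (x ⊔ y) ⊓ (y ⊔ x) ⊓ (x ⊔ y) = x ⊔ y.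
Proof.
  pose proof (meet_join_sandwich (x ⊔ y) y x) as E.
  now rewrite join_assoc, <- (join_assoc y x (y ⊔ x)), join_idem in E.
Qed.

Lemma meet_join_swap (x y : S) : x ⊓ (y ⊔ x) ⊓ (x ⊔ y) = x.
Proof.
  transitivity (x ⊓ (x ⊔ y) ⊓ (y ⊔ x) ⊓ (x ⊔ y)).
  - now rewrite meet_absorb_prefix.
  - now rewrite join_swap_sandwich, meet_absorb.
Qed.

Lemma meet_insert_join (x y w : S) : x ⊓ y = x ⊓ (w ⊔ y ⊔ x) ⊓ y.
Proof.
  transitivity ((x ⊓ ((w ⊔ y) ⊔ x) ⊓ (x ⊔ w ⊔ y)) ⊓ y).
  - now rewrite meet_join_swap.
  - now rewrite !meet_assoc, join_assoc, <- (join_assoc x w y), meet_absorb_r.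
Qed.

Lemma meet_insert_join_sandwich (x y w : S) : x ⊓ y ⊓ x = x ⊓ (w ⊔ x) ⊓ y ⊓ x.
Proof. now rewrite (meet_insert_join x (y ⊓ x) w), join_absorb_r. Qed.

Lemma join_meet_below (x y : S) : x ⊓ y ⊔ x = x ⊓ (x ⊓ y ⊔ x).
Proof.
  transitivity ((x ⊔ (x ⊓ y ⊔ x)) ⊓ (x ⊓ y ⊔ x)).
  - symmetry. apply meet_absorb_r.
  - now rewrite <- join_assoc, join_absorb, join_idem.
Qed.

Lemma meet_drop_join (x v y : S) : (x ⊓ v ⊔ x) ⊓ y ⊓ x = x ⊓ y ⊓ x.
Proof. rewrite join_meet_below, meet_assoc. symmetry. apply meet_insert_join_sandwich. Qed.

Lemma meet_regular (x y z : S) : x ⊓ y ⊓ x ⊓ z ⊓ x = x ⊓ y ⊓ z ⊓ x.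
Proof.
  rewrite <- (meet_drop_join x y z).
  now rewrite <- (meet_assoc x y), meet_absorb_prefix, meet_assoc.
Qed.

(* Regularity applied twice collapses the word arising from r_W. *)
Lemma meet_sandwich_collapse (x y z : S) :
  x ⊓ y ⊓ x ⊓ z ⊓ x ⊓ y ⊓ x = x ⊓ y ⊓ z ⊓ y ⊓ x.
Proof.
  pose proof (meet_regular x y (z ⊓ x ⊓ y)) as R1.
  pose proof (meet_regular x (y ⊓ z) y) as R2.
  rewrite ?meet_assoc in R1, R2.
  now rewrite R1, R2.
Qed.

Lemma join_sandwich_meet_prefix (x y r : S) : (x ⊔ y ⊔ x) ⊓ x ⊓ r = x ⊓ r.
Proof. now rewrite <- meet_assoc, <- join_assoc, meet_absorb_r. Qed.

End MeetRegularity.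

Lemma skew_lattice_dual {S : Type} {m j : S -> S -> S} :
  is_skew_lattice m j -> is_skew_lattice j m.
Proof. unfold is_skew_lattice. tauto. Qed.

Section BraidComponents.

Context {S : Type} {m j : S -> S -> S} (H : is_skew_lattice m j).

Let H_dual : is_skew_lattice j m := skew_lattice_dual H.

Local Infix "⊓" := m (at level 41, right associativity).
Local Infix "⊔" := j (at level 46, right associativity).

Lemma braid_first_component (x y z : S) :
  (x ⊓ y ⊓ x) ⊓ ((x ⊔ y ⊔ x) ⊓ z ⊓ (x ⊔ y ⊔ x)) ⊓ (x ⊓ y ⊓ x)
  = x ⊓ (y ⊓ z ⊓ y) ⊓ x.
Proof.
  rewrite ?(meet_assoc H), (meet_absorb_prefix H), (join_sandwich_meet_prefix H).
  apply (meet_sandwich_collapse H).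
Qed.

(* Third components: b∨z∨b = e∨d∨e; both reduce to x∨y∨z∨y∨x. *)
Lemma braid_third_component (x y z : S) :
  (x ⊔ y ⊔ x) ⊔ z ⊔ (x ⊔ y ⊔ x)
  = (x ⊔ (y ⊓ z ⊓ y) ⊔ x) ⊔ (y ⊔ z ⊔ y) ⊔ (x ⊔ (y ⊓ z ⊓ y) ⊔ x).
Proof.
  pose proof (meet_regular H_dual x (y ⊓ z ⊓ y) (y ⊔ z ⊔ y ⊔ x ⊔ y ⊓ z ⊓ y)) as R1.
  pose proof (meet_regular H_dual x (y ⊔ z ⊔ y) (y ⊓ z ⊓ y)) as R2.
  rewrite ?(join_assoc H) in R1, R2. rewrite ?(join_assoc H).
  rewrite (meet_sandwich_collapse H_dual), R1, (join_sandwich_meet_prefix H_dual), R2.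
  now rewrite (meet_absorb_prefix H_dual).
Qed.

End BraidComponents.

Theorem mainTheorem16 (S : Type) (m j : S -> S -> S) :
  is_skew_lattice m j ->
  (weak_distributive_solution m j <->
   forall x y z : S,
     j (j (m x (m y x)) (m (j x (j y x)) (m z (j x (j y x))))) (m x (m y x)) =
     m (m (j x (j (m y (m z y)) x)) (j y (j z y))) (j x (j (m y (m z y)) x))).
Proof.
  intros H.
  unfold weak_distributive_solution, braid_eq, r12, r23, rW.
  split.
  -
    intros Hbraid x y z.
    specialize (Hbraid (x, y, z)). simpl in Hbraid.
    injection Hbraid as _ Hmiddle _.
    rewrite (join_assoc H), (meet_assoc H).
    exact Hmiddle.
  -
    intros Hmiddle [[x y] z]. simpl.
    rewrite (braid_first_component H), (braid_third_component H).
    specialize (Hmiddle x y z).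
    rewrite (join_assoc H), (meet_assoc H) in Hmiddle.
    now rewrite Hmiddle.
Qed.
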